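(* Let $A,B$ be Hermitian operators on $\mathbb{C}^N$ that each have exactly $N'$ distinct eigenvalues. If the KD distribution of $(A,B)$ distinguishes all states (i.e. $\rho\mapsto K^{A,B}_\rho$ is injective on density operators on $\mathbb{C}^N$), then $N'\ge\frac12\left(\sqrt{2N^2-1}+1\right)$.
   Context: A density operator is a positive semidefinite trace-one operator. Kirkwood–Dirac (KD) distribution: for Hermitian operators $A_1,\dots,A_n$ on $\mathbb{C}^N$ and a density operator $\rho$, define $\#^{K}_{A_1,\dots,A_n}(x)=(2\pi)^{-n}\int_{\mathbb{R}^n} e^{-is_1A_1}\cdots e^{-is_nA_n}\,e^{i s\cdot x}\,d^ns$ (inverse Fourier transform in the distributional sense), and $K^{A_1,\dots,A_n}_\rho(x)=\mathrm{Tr}[\#^{K}_{A_1,\dots,A_n}(x)\,\rho]$. *)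

From HB Require Import structures.
From mathcomp Require Import all_boot all_order all_algebra.
From mathcomp Require Import complex.
From mathcomp Require Import reals.
From Stdlib Require Import ClassicalEpsilon.

Set Implicit Arguments.
Unset Strict Implicit.
Unset Printing Implicit Defensive.

Import Order.TTheory GRing.Theory Num.Theory.
Local Open Scope ring_scope.
Local Open Scope sesquilinear_scope.

Section KD.
Variable R : realType.
Local Notation C := (R[i]).

Definition adjmx m n (M : 'M[C]_(m, n)) : 'M[C]_(n, m) := M ^t*.

Definition density_operator (N : nat) (rho : 'M[C]_N) : Prop :=
  rho \is hermsymmx /\
  (forall v : 'cV[C]_N, 0 <= (adjmx v *m rho *m v) ord0 ord0) /\
  \tr rho = 1.

(* P is the spectral projector of A at a: the orthogonal projector onto the
   eigenspace ker (A - a).  (P = 0 when a is not an eigenvalue.) *)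
Definition is_spec_proj (N : nat) (A : 'M[C]_N) (a : C) (P : 'M[C]_N) : Prop :=
  [/\ P *m P = P, P \is hermsymmx, A *m P = a *: P &
      forall v : 'cV[C]_N, A *m v = a *: v -> P *m v = v].

Definition specproj (N : nat) (A : 'M[C]_N) (a : C) : 'M[C]_N :=
  epsilon (inhabits 0) (is_spec_proj A a).

(* For Hermitian A, B with
   spectral decompositions A = sum_j a_j P_j, B = sum_k b_k Q_k, the inverse
   Fourier transform of s |-> e^{-i s1 A} e^{-i s2 B} is the finite sum of
   point masses sum_{j,k} delta_{(a_j,b_k)} P_j Q_k, so K^{A,B}_rho is the
   atomic (complex) measure on R^2 whose mass at the point (x,y) is
   Tr[P_A(x) P_B(y) rho]; we represent it by this mass function. *)
Definition KD (N : nat) (A B rho : 'M[C]_N) (x y : R) : C :=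
  \tr (specproj A (Complex x 0) *m specproj B (Complex y 0) *m rho).

Definition KD_distinguishes_states (N : nat) (A B : 'M[C]_N) : Prop :=
  forall rho1 rho2 : 'M[C]_N, density_operator rho1 -> density_operator rho2 ->
    KD A B rho1 = KD A B rho2 -> rho1 = rho2.

Definition num_distinct_eigenvalues (N : nat) (A : 'M[C]_N) (n : nat) : Prop :=
  exists s : seq C, [/\ uniq s, size s = n & forall a, eigenvalue A a = (a \in s)].

End KD.

From HB Require Import structures.
From mathcomp Require Import all_boot all_order all_algebra.
From mathcomp Require Import complex reals ring lra.
From Stdlib Require Import ClassicalEpsilon FunctionalExtensionality.

Set Implicit Arguments.
Unset Strict Implicit.
Unset Printing Implicit Defensive.

Import Order.TTheory GRing.Theory Num.Theory.
Local Open Scope ring_scope.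
Local Open Scope sesquilinear_scope.

(** Writing A = sum_a a P_a and B = sum_b b Q_b, the KD distribution of a
  state rho is the N' x N' complex matrix (Tr[P_a Q_b rho])_{a,b}.  Its row
  sums Tr[P_a rho] and column sums Tr[Q_b rho] are real, so on the real space
  of Hermitian matrices (of dimension N^2) the map H |-> (Tr[P_a Q_b H])
  takes values in a real space of dimension N'^2 + (N'-1)^2: the real parts,
  plus the imaginary parts off the last row and column.  Injectivity on
  states gives injectivity on Hermitian matrices, since a traceless Hermitian
  matrix is a multiple of a difference of two states and the trace of H is
  the sum of all its KD entries.  Hence N^2 <= N'^2 + (N'-1)^2, that is
  2 N^2 - 1 <= (2 N' - 1)^2. *)

Section SpectralProjectors.
Variable R : realType.
Local Notation C := R[i].

Lemma hermsymmxP N (M : 'M[C]_N) : reflect (M^t* = M) (M \is hermsymmx).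
Proof.
apply: (iffP idP) => [/is_hermitianmxP|M_herm].
  by rewrite expr0 scale1r => /esym.
by apply/is_hermitianmxP; rewrite expr0 scale1r M_herm.
Qed.

Lemma adjmxM m n p (A : 'M[C]_(m, n)) (B : 'M[C]_(n, p)) :
  (A *m B)^t* = B^t* *m A^t*.
Proof. by rewrite trmx_mul map_mxM. Qed.

Lemma unitarymx_adjK N (U : 'M[C]_N) : U \is unitarymx -> U^t* *m U = 1%:M.
Proof. by move=> U_unitary; rewrite -(invmx_unitary U_unitary) mulVmx ?unitarymx_unit. Qed.

Lemma diag_mx_adj N (e : 'rV[C]_N) :
  (forall i, e 0 i \is Num.real) -> (diag_mx e)^t* = diag_mx e.
Proof.
move=> e_real; apply/matrixP => i j; rewrite !mxE rmorphMn.
by case: (eqVneq i j) => [->|_]; rewrite ?mulr0n // !mulr1n; apply: conj_Creal.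
Qed.

Lemma is_spec_proj_uniq N (A : 'M[C]_N) a P P' :
  is_spec_proj A a P -> is_spec_proj A a P' -> P = P'.
Proof.
have fixes_range Q Q' : is_spec_proj A a Q -> is_spec_proj A a Q' -> Q' *m Q = Q.
  move=> [_ _ AQ _] [_ _ _ Q'_fix]; apply/matrixP => i j.
  have AQj : A *m (Q *m delta_mx j (ord0 : 'I_1)) = a *: (Q *m delta_mx j (ord0 : 'I_1)).
    by rewrite mulmxA AQ -scalemxAl.
  by have /matrixP/(_ i ord0) := Q'_fix _ AQj; rewrite mulmxA -!colE !mxE.
move=> P_proj P'_proj; have P'P := fixes_range _ _ P_proj P'_proj.
have PP' := fixes_range _ _ P'_proj P_proj.
case: P_proj => _ /hermsymmxP P_herm _ _; case: P'_proj => _ /hermsymmxP P'_herm _ _.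
(* P = P' P = (P' P)^* = P P' = P'. *)
by rewrite -P'P -P_herm -P'_herm -adjmxM PP'.
Qed.

Definition diag_indicator N (d : 'rV[C]_N) (a : C) : 'M[C]_N :=
  diag_mx (\row_i (d 0 i == a)%:R).

Section UnitaryDiagonalization.
Variables (N : nat) (A U : 'M[C]_N) (d : 'rV[C]_N).
Hypotheses (U_unitary : U \is unitarymx) (A_diag : A = U^t* *m diag_mx d *m U).

Lemma is_spec_proj_indicator a :
  is_spec_proj A a (U^t* *m diag_indicator d a *m U).
Proof.
have indicator_idem : diag_indicator d a *m diag_indicator d a = diag_indicator d a.
  rewrite mulmx_diag; congr diag_mx; apply/rowP => i; rewrite !mxE.
  by case: eqP; rewrite ?mulr1 ?mulr0.
have diag_indicator_eigen : diag_mx d *m diag_indicator d a = a *: diag_indicator d a.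
  apply/matrixP => i j; rewrite mul_diag_mx !mxE.
  case: (eqVneq i j) => [->|_]; rewrite ?mulr0n ?mulr0 // !mulr1n.
  by case: eqP => [->|_]; rewrite ?mulr1 ?mulr0.
split.
- by rewrite !mulmxA (mulmxtVK _ U_unitary) -[_ *m diag_indicator d a]mulmxA indicator_idem.
- apply/hermsymmxP; rewrite !adjmxM trmxCK diag_mx_adj ?mulmxA // => i.
  by rewrite mxE realn.
- rewrite A_diag !mulmxA (mulmxtVK _ U_unitary) -[_ *m diag_indicator d a]mulmxA.
  by rewrite diag_indicator_eigen -scalemxAr -scalemxAl.
- move=> v Av.
  have dUv : diag_mx d *m (U *m v) = a *: (U *m v).
    have UA : U *m A = diag_mx d *m U.
      by rewrite A_diag !mulmxA (unitarymxP U_unitary) mul1mx.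
    by rewrite mulmxA -UA -mulmxA Av scalemxAr.
  have indicator_fix : diag_indicator d a *m (U *m v) = U *m v.
    apply/matrixP => i j; have /matrixP/(_ i j) := dUv.
    rewrite !mul_diag_mx !mxE; have [-> _|d_neq_a] := eqVneq (d 0 i) a; first by rewrite mul1r.
    move/eqP; rewrite -subr_eq0 -mulrBl mulf_eq0 subr_eq0 (negbTE d_neq_a) /= => /eqP ->.
    by rewrite mulr0.
  by rewrite -!mulmxA indicator_fix mulmxA unitarymx_adjK ?mul1mx.
Qed.

Lemma specproj_unitary_diagE a : specproj A a = U^t* *m diag_indicator d a *m U.
Proof.
apply: (is_spec_proj_uniq _ (is_spec_proj_indicator a)).
apply: epsilon_spec; exists (U^t* *m diag_indicator d a *m U).
exact: is_spec_proj_indicator.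
Qed.

Lemma eigenvalue_unitary_diag i : eigenvalue A (d 0 i).
Proof.
apply/eigenvalueP; exists (row i U).
  rewrite -row_mul A_diag !mulmxA (unitarymxP U_unitary) mul1mx row_mul.
  by rewrite row_diag_mx -scalemxAl -rowE.
apply/eqP => Ui0; have := congr1 (row i) (unitarymxP U_unitary).
rewrite row_mul Ui0 mul0mx => /rowP/(_ i); rewrite !mxE eqxx /=.
by move/eqP; rewrite eq_sym oner_eq0.
Qed.

Lemma specproj_unitary_diag_eq0 a : ~~ eigenvalue A a -> specproj A a = 0.
Proof.
move=> Na; rewrite specproj_unitary_diagE.
suff -> : diag_indicator d a = 0 by rewrite mulmx0 mul0mx.
apply/matrixP => i j; rewrite !mxE.
have /negbTE -> : d 0 i != a by apply: contraNneq Na => <-; apply: eigenvalue_unitary_diag.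
by rewrite mul0rn.
Qed.

Lemma sum_specproj_unitary_diag s : uniq s ->
  (forall a, eigenvalue A a -> a \in s) -> \sum_(a <- s) specproj A a = 1%:M.
Proof.
move=> s_uniq s_eig.
under eq_bigr do rewrite specproj_unitary_diagE.
rewrite -mulmx_suml -mulmx_sumr.
suff -> : \sum_(a <- s) diag_indicator d a = 1%:M by rewrite mulmx1 unitarymx_adjK.
apply/matrixP => i j; rewrite summxE !mxE.
under eq_bigr do rewrite !mxE.
rewrite sumrMnl (bigD1_seq (d 0 i)) ?s_eig ?eigenvalue_unitary_diag //= eqxx big1 ?addr0 //.
by move=> a /negbTE; rewrite eq_sym => ->.
Qed.

End UnitaryDiagonalization.

Section NormalSpectralProjectors.
Variables (N : nat) (A : 'M[C]_N).
Hypothesis A_normal : A \is normalmx.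

Lemma normalmx_spectral_decomposition :
  A = (spectralmx A)^t* *m diag_mx (spectral_diag A) *m spectralmx A.
Proof. by rewrite -(invmx_unitary (spectral_unitarymx A)); apply/orthomx_spectralP. Qed.

Let U_unitary := spectral_unitarymx A.
Let A_diag := normalmx_spectral_decomposition.

Lemma specproj_hermsymmx a : specproj A a \is hermsymmx.
Proof.
rewrite (specproj_unitary_diagE U_unitary A_diag).
by case: (is_spec_proj_indicator U_unitary A_diag a).
Qed.

Lemma specproj_eq0 a : ~~ eigenvalue A a -> specproj A a = 0.
Proof. exact: (specproj_unitary_diag_eq0 U_unitary A_diag). Qed.

Lemma sum_specproj s : uniq s ->
  (forall a, eigenvalue A a -> a \in s) -> \sum_(a <- s) specproj A a = 1%:M.
Proof. exact: (sum_specproj_unitary_diag U_unitary A_diag). Qed.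

Lemma sum_specproj_nth n s : uniq s -> (forall a, eigenvalue A a = (a \in s)) ->
  size s = n -> \sum_(i < n) specproj A s`_i = 1%:M.
Proof.
move=> s_uniq s_eig <-.
have /(sum_specproj s_uniq) : forall a, eigenvalue A a -> a \in s.
  by move=> a; rewrite s_eig.
by rewrite (big_nth 0) big_mkord.
Qed.

End NormalSpectralProjectors.

Lemma specproj_pairing_eq0 N m n (A B H : 'M[C]_N) (sA sB : seq C) :
  A \is normalmx -> B \is normalmx ->
  (forall a, eigenvalue A a = (a \in sA)) -> (forall b, eigenvalue B b = (b \in sB)) ->
  size sA = m -> size sB = n ->
  (forall (i : 'I_m) (j : 'I_n), \tr (specproj A sA`_i *m specproj B sB`_j *m H) = 0) ->
  forall a b, \tr (specproj A a *m specproj B b *m H) = 0.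
Proof.
move=> A_normal B_normal sA_eig sB_eig sA_size sB_size pairing0 a b.
have [aA|/(specproj_eq0 A_normal) ->] := boolP (eigenvalue A a); last first.
  by rewrite !mul0mx mxtrace0.
have [bB|/(specproj_eq0 B_normal) ->] := boolP (eigenvalue B b); last first.
  by rewrite mulmx0 mul0mx mxtrace0.
rewrite sA_eig in aA; rewrite sB_eig in bB.
have ia : (index a sA < m)%N by rewrite -sA_size index_mem.
have ib : (index b sB < n)%N by rewrite -sB_size index_mem.
by have := pairing0 (Ordinal ia) (Ordinal ib); rewrite /= !nth_index.
Qed.
End SpectralProjectors.

Section States.
Variable R : realType.
Local Notation C := R[i].

Lemma density_operator_unitary_diag N (U : 'M[C]_N) (e : 'rV[C]_N) :
  U \is unitarymx -> (forall i, 0 <= e 0 i) -> \sum_i e 0 i = 1 ->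
  density_operator (U^t* *m diag_mx e *m U).
Proof.
move=> U_unitary e_ge0 e_sum1; split; [|split].
- apply/hermsymmxP; rewrite !adjmxM trmxCK mulmxA diag_mx_adj // => i.
  exact: ger0_real.
- move=> v; rewrite /adjmx !mulmxA -(mulmxA _ U v) -adjmxM.
  move: (U *m v) => w; rewrite mul_mx_diag !mxE; apply: sumr_ge0 => k _.
  by rewrite !mxE mulrAC mulr_ge0 // mulrC mul_conjC_ge0.
- by rewrite mxtrace_mulC mulmxA (unitarymxP U_unitary) mul1mx mxtrace_diag.
Qed.

Lemma traceless_hermsymmx_state_diff N (H : 'M[C]_N) :
  (0 < N)%N -> H \is hermsymmx -> \tr H = 0 ->
  exists rho1 rho2 c, [/\ density_operator rho1, density_operator rho2,
                         c != 0 & rho1 - rho2 = c *: H].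
Proof.
move=> N_gt0 H_herm trH0.
have H_diag := normalmx_spectral_decomposition (hermitian_normalmx H_herm).
have U_unitary := spectral_unitarymx H.
move: H_diag U_unitary; set U := spectralmx H; set d := spectral_diag H => H_diag U_unitary.
have d_real i : d 0 i \is Num.real.
  by have /mxOverP := hermitian_spectral_diag_real H_herm; apply.
have sum_d0 : \sum_i d 0 i = 0.
  by move: trH0; rewrite H_diag mxtrace_mulC mulmxA (unitarymxP U_unitary) mul1mx mxtrace_diag.
set S := \sum_i `|d 0 i|; set eps := (1 + S)^-1; set w := (N%:R : C)^-1.
have eps_gt0 : 0 < eps by rewrite invr_gt0 ltr_pwDl // sumr_ge0.
have w_gt0 : 0 < w by rewrite invr_gt0 ltr0n.
have Nw : N%:R * w = 1 by rewrite mulfV // pnatr_eq0 -lt0n.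
have perturb_ge0 i : 0 <= 1 + eps * d 0 i.
  have d_ge : - S <= d 0 i.
    by apply: real_lerNnormlW => //; rewrite /S (bigD1 i) //= lerDl sumr_ge0.
  have -> : 1 + eps * d 0 i = eps * (1 + (S + d 0 i)).
    by rewrite addrA mulrDr mulVf ?gt_eqF // ltr_pwDl // sumr_ge0.
  apply: mulr_ge0; first exact: ltW.
  by apply: addr_ge0 => //; rewrite -[S]opprK addrC subr_ge0.
(* rho1 = (1 + eps H) / N and rho2 = 1 / N, written in the eigenbasis of H. *)
exists (U^t* *m diag_mx (\row_i (w * (1 + eps * d 0 i))) *m U),
       (U^t* *m diag_mx (\row_i w) *m U), (w * eps); split.
- apply: density_operator_unitary_diag => // [i|]; rewrite ?mxE.
    exact: mulr_ge0 (ltW w_gt0) (perturb_ge0 i).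
  under eq_bigr do rewrite mxE.
  by rewrite -mulr_sumr big_split /= -mulr_sumr sum_d0 mulr0 addr0 sumr_const card_ord
    mulrC Nw.
- apply: density_operator_unitary_diag => // [i|]; rewrite ?mxE; first exact: ltW.
  by under eq_bigr do rewrite mxE; rewrite sumr_const card_ord -mulr_natl Nw.
- by rewrite mulf_neq0 ?gt_eqF.
- rewrite H_diag -mulmxBl -mulmxBr scalemxAl scalemxAr; congr (_ *m _ *m _).
  apply/matrixP => i j; rewrite !mxE.
  by case: (eqVneq i j) => [->|_] /=; rewrite ?mulr0n ?subr0 ?mulr0 // !mulr1n; ring.
Qed.

Lemma KD_distinguishes_traceless N (A B H : 'M[C]_N) : (0 < N)%N ->
  KD_distinguishes_states A B -> H \is hermsymmx -> \tr H = 0 ->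
  (forall x y, KD A B H x y = 0) -> H = 0.
Proof.
move=> N_gt0 KD_inj H_herm trH0 KDH0.
have [rho1 [rho2 [c [rho1_state rho2_state c_neq0 rho12]]]] :=
  traceless_hermsymmx_state_diff N_gt0 H_herm trH0.
suff rho1_eq : rho1 = rho2.
  move: rho12; rewrite rho1_eq subrr => /esym/eqP.
  by rewrite scaler_eq0 (negbTE c_neq0) => /eqP.
apply: KD_inj => //; apply: functional_extensionality => x.
apply: functional_extensionality => y; apply/eqP; rewrite -subr_eq0 /KD.
by rewrite -linearB /= -mulmxBr rho12 -scalemxAr mxtraceZ -/(KD A B H x y) KDH0 mulr0.
Qed.

End States.

Lemma mxtrace_eq0_of_resolutions (T : pzRingType) (I J : finType) N
    (P : I -> 'M[T]_N) (Q : J -> 'M[T]_N) (H : 'M[T]_N) :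
  \sum_i P i = 1%:M -> \sum_j Q j = 1%:M ->
  (forall i j, \tr (P i *m Q j *m H) = 0) -> \tr H = 0.
Proof.
move=> sum_P sum_Q PQH0.
have -> : H = (\sum_i P i) *m (\sum_j Q j) *m H by rewrite sum_P sum_Q !mul1mx.
rewrite !mulmx_suml raddf_sum big1 // => i _.
by rewrite mulmx_sumr mulmx_suml raddf_sum big1 // => j _; apply: PQH0.
Qed.

Section RealCoordinates.
Variable R : realType.
Local Notation C := R[i].

Lemma Im_mxtrace_hermsymmx_mul N (P H : 'M[C]_N) :
  P \is hermsymmx -> H \is hermsymmx -> complex.Im (\tr (P *m H)) = 0.
Proof.
move=> /hermsymmxP P_herm /hermsymmxP H_herm.
have : \tr ((P *m H)^t*) = (\tr (P *m H))^* by rewrite trace_map_mx mxtrace_tr.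
rewrite adjmxM P_herm H_herm mxtrace_mulC => /esym/CrealP.
by case: (\tr (P *m H)) => x y; rewrite complex_real => /eqP.
Qed.

(* A real-linear bijection from real N x N matrices onto Hermitian ones; only
  its injectivity is needed. *)
Definition herm_of_real N (X : 'M[R]_N) : 'M[C]_N :=
  \matrix_(i, j) Complex (X i j + X j i) (X i j - X j i).

Lemma herm_of_real_hermsymmx N (X : 'M[R]_N) : herm_of_real X \is hermsymmx.
Proof.
apply/hermsymmxP/matrixP => i j; rewrite !mxE /=.
by apply/eqP; rewrite eq_complex /=; apply/andP; split; apply/eqP; ring.
Qed.

Lemma herm_of_realP N k (X Y : 'M[R]_N) :
  herm_of_real (k *: X + Y) = (k%:C)%C *: herm_of_real X + herm_of_real Y.
Proof.
apply/matrixP => i j; rewrite !mxE /=.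
by apply/eqP; rewrite eq_complex /=; apply/andP; split; apply/eqP; ring.
Qed.

Lemma herm_of_real_eq0 N (X : 'M[R]_N) : herm_of_real X = 0 -> X = 0.
Proof.
move=> X0; apply/matrixP => i j; have /matrixP/(_ i j) := X0.
by rewrite !mxE => -[]; lra.
Qed.

End RealCoordinates.

Lemma linear_inj_leq (F : fieldType) m n (f : {linear 'rV[F]_m -> 'rV[F]_n}) :
  (forall v, f v = 0 -> v = 0) -> (m <= n)%N.
Proof.
move=> f_inj; have : row_free (lin1_mx f).
  by apply: inj_row_free => v; rewrite mul_rV_lin1; apply: f_inj.
by rewrite /row_free => /eqP <-; apply: rank_leq_col.
Qed.

Lemma mx_eq0_of_block_sums (V : zmodType) n (M : 'M[V]_n.+1) :
  (forall i j : 'I_n, M (lift ord_max i) (lift ord_max j) = 0) ->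
  (forall i, \sum_j M i j = 0) -> (forall j, \sum_i M i j = 0) -> M = 0.
Proof.
move=> M_block M_row M_col.
have sum_recr (F : 'I_n.+1 -> V) :
    \sum_i F i = \sum_(i < n) F (lift ord_max i) + F ord_max.
  rewrite big_ord_recr; congr (_ + _); apply: eq_bigr => i _.
  by congr F; apply: val_inj; exact: (esym (lift_max i)).
have M_last_col i : M (lift ord_max i) ord_max = 0.
  by have := M_row (lift ord_max i); rewrite sum_recr big1 ?add0r.
have M_last_row j : M ord_max (lift ord_max j) = 0.
  by have := M_col (lift ord_max j); rewrite sum_recr big1 ?add0r.
have M_corner : M ord_max ord_max = 0.
  by have := M_row ord_max; rewrite sum_recr big1 ?add0r.
apply/matrixP => i j; rewrite mxE.
by case: (unliftP ord_max i) => [i'|] ->; case: (unliftP ord_max j) => [j'|] ->.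
Qed.

Section DimensionCount.
Variables (R : realType) (N n : nat) (W : 'I_n.+1 -> 'I_n.+1 -> 'M[R[i]]_N).
Hypotheses (W_row : forall a, \sum_b W a b \is hermsymmx)
  (W_col : forall b, \sum_a W a b \is hermsymmx)
  (W_inj : forall H, H \is hermsymmx -> (forall a b, \tr (W a b *m H) = 0) -> H = 0).

Definition pairing_mx (H : 'M[R[i]]_N) : 'M[R[i]]_n.+1 :=
  \matrix_(a, b) \tr (W a b *m H).

(* The imaginary parts in the last row and column are omitted: they are
  determined by the others, because the row and column sums are real. *)
Definition pairing_coords (v : 'rV[R]_(N * N)) : 'rV[R]_(n.+1 * n.+1 + n * n) :=
  row_mx (mxvec (map_mx (@complex.Re R) (pairing_mx (herm_of_real (vec_mx v)))))
    (mxvec (\matrix_(a, b) complex.Im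
       (pairing_mx (herm_of_real (vec_mx v)) (lift ord_max a) (lift ord_max b)))).

Lemma pairing_mxP k H H' :
  pairing_mx ((k%:C)%C *: H + H') = (k%:C)%C *: pairing_mx H + pairing_mx H'.
Proof. by apply/matrixP => a b; rewrite !mxE mulmxDr -scalemxAr mxtraceD mxtraceZ. Qed.

Lemma pairing_coords_linear : linear pairing_coords.
Proof.
move=> k u v; rewrite /pairing_coords linearP herm_of_realP pairing_mxP.
rewrite scale_row_mx add_row_mx -!linearP.
by congr (row_mx (mxvec _) (mxvec _)); apply/matrixP => a b; rewrite !mxE;
  case: (\tr _) => ? ?; case: (\tr _) => ? ? /=; ring.
Qed.

HB.instance Definition _ := GRing.isLinear.Build R 'rV[R]_(N * N)
  'rV[R]_(n.+1 * n.+1 + n * n) *:%R pairing_coords pairing_coords_linear.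

Lemma pairing_coords_inj v : pairing_coords v = 0 -> v = 0.
Proof.
set H := herm_of_real (vec_mx v); set K := pairing_mx H => coords0.
have [ReK0 ImK_block0] : map_mx (@complex.Re R) K = 0 /\
    \matrix_(a, b) complex.Im (K (lift ord_max a) (lift ord_max b)) = 0.
  move: coords0; rewrite /pairing_coords -/H -/K -row_mx0 => /eq_row_mx[].
  by move=> /eqP + /eqP; rewrite !mxvec_eq0 => /eqP -> /eqP ->.
have K_sum (r : seq 'I_n.+1) (F : 'I_n.+1 -> 'M_N) :
    \sum_(c <- r) \tr (F c *m H) = \tr ((\sum_(c <- r) F c) *m H).
  by rewrite mulmx_suml raddf_sum.
have ImK0 : map_mx (@complex.Im R) K = 0.
  apply: mx_eq0_of_block_sums => [a b|a|b]; rewrite ?mxE.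
  - by have /matrixP/(_ a b) := ImK_block0; rewrite !mxE.
  - under eq_bigr do rewrite !mxE.
    rewrite -(raddf_sum (@complex.Im R : Rcomplex R -> R)) K_sum.
    exact: Im_mxtrace_hermsymmx_mul (W_row a) (herm_of_real_hermsymmx _).
  - under eq_bigr do rewrite !mxE.
    rewrite -(raddf_sum (@complex.Im R : Rcomplex R -> R)) K_sum.
    exact: Im_mxtrace_hermsymmx_mul (W_col b) (herm_of_real_hermsymmx _).
have WH0 a b : \tr (W a b *m H) = 0.
  have /matrixP/(_ a b) := ReK0; have /matrixP/(_ a b) := ImK0.
  by rewrite !mxE; case: (\tr _) => x y /= -> ->.
have /herm_of_real_eq0/(congr1 mxvec) := W_inj (herm_of_real_hermsymmx _) WH0.
by rewrite vec_mxK linear0.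
Qed.

Lemma pairing_dim_leq : (N * N <= n.+1 * n.+1 + n * n)%N.
Proof. exact: linear_inj_leq pairing_coords_inj. Qed.

End DimensionCount.

Lemma sqrt_bound_of_sqr_le (R : rcfType) (x m : R) :
  0 <= m -> x ^+ 2 <= (m + 1) ^+ 2 + m ^+ 2 ->
  (Num.sqrt (2 * x ^+ 2 - 1) + 1) / 2 <= m + 1.
Proof.
move=> m_ge0 x_le.
(* The hypothesis says 2 x^2 - 1 <= (2 m + 1)^2. *)
have : Num.sqrt (2 * x ^+ 2 - 1) <= 2 * m + 1.
  rewrite -[X in _ <= X]ger0_norm; last by lra.
  by rewrite -sqrtr_sqr ler_sqrt ?sqr_ge0 //; nra.
by rewrite ler_pdivrMr; lra.
Qed.

Theorem corollary1 (R : realType) (N N' : nat) (A B : 'M[R[i]]_N) :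
  (0 < N)%N ->
  A \is hermsymmx -> B \is hermsymmx ->
  num_distinct_eigenvalues A N' -> num_distinct_eigenvalues B N' ->
  KD_distinguishes_states A B ->
  (Num.sqrt (2 * (N%:R : R) ^+ 2 - 1) + 1) / 2 <= (N'%:R : R).
Proof.
move=> N_gt0 /hermitian_normalmx A_normal /hermitian_normalmx B_normal
  [sA [sA_uniq sA_size sA_eig]] [sB [sB_uniq sB_size sB_eig]] KD_inj.
case: N' sA_size sB_size => [|n] sA_size sB_size.
  by have [a] := eigenvalue_closed A N_gt0; rewrite sA_eig (size0nil sA_size).
pose P (a : 'I_n.+1) := specproj A sA`_a; pose Q (b : 'I_n.+1) := specproj B sB`_b.
have sum_P : \sum_a P a = 1%:M := sum_specproj_nth A_normal sA_uniq sA_eig sA_size.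
have sum_Q : \sum_b Q b = 1%:M := sum_specproj_nth B_normal sB_uniq sB_eig sB_size.
have : (N * N <= n.+1 * n.+1 + n * n)%N.
  apply: (pairing_dim_leq (W := fun a b => P a *m Q b)) => [a|b|H H_herm PQH0].
  - by rewrite -mulmx_sumr sum_Q mulmx1 specproj_hermsymmx.
  - by rewrite -mulmx_suml sum_P mul1mx specproj_hermsymmx.
  apply: (KD_distinguishes_traceless N_gt0 KD_inj H_herm).
    exact: mxtrace_eq0_of_resolutions sum_P sum_Q PQH0.
  move=> x y; apply: (specproj_pairing_eq0 A_normal B_normal sA_eig sB_eig sA_size sB_size).
  exact: PQH0.
rewrite -(ler_nat R) natrD !natrM -!expr2 -natr1 => N_sqr_le.
exact: sqrt_bound_of_sqr_le.
Qed.
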